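(* Assume the standing setup with $\lambda_1(\boldsymbol\Omega_K)>1$, and set $\mathbf v_1^{(r)}=\mathbf D_{\boldsymbol\rho^{\odot1/2}}(\mathbf 1_K-\mathbf g(1))$ and $\mathbf v_1^{(l)}=\boldsymbol\Omega_K\mathbf v_1^{(r)}$. Then $\mathbf v_1^{(r)}\succ\mathbf 0_K$, $(\mathbf D_{\mathbf g(1)}\boldsymbol\Omega_K)\mathbf v_1^{(r)}=\mathbf v_1^{(r)}$ and $(\mathbf D_{\mathbf g(1)}\boldsymbol\Omega_K)^\top\mathbf v_1^{(l)}=\mathbf v_1^{(l)}$.
   Context: Standing setup: $K\ge1$, $\boldsymbol\rho=(\rho_k)$ with $\rho_k\in(0,1)$, $\sum\rho_k=1$; $\mathbf S_K=(s_{kl})$ symmetric with $s_{kl}>0$; $\mathbf D_{\mathbf v}$ diagonal with diagonal $\mathbf v$; $\boldsymbol\Omega_K=\mathbf D_{\boldsymbol\rho^{\odot1/2}}\mathbf S_K\mathbf D_{\boldsymbol\rho^{\odot1/2}}$, $\boldsymbol\Gamma_K=\mathbf S_K\mathbf D_{\boldsymbol\rho}$; $\lambda_1$ = largest eigenvalue. For each $N$, $[N]$ is split into consecutive blocks $B_k$ with $|B_k|/N\to\rho_k$; $\Sigma_{ij}=s_{kl}$ for $i\in B_k,j\in B_l$; $\mathbf H$ symmetric with independent standard Gaussian entries on/above the diagonal; $\mathbf X=\mathbf H\odot\boldsymbol\Sigma^{\odot1/2}-N^{-1/2}\mathrm{Diag}(\boldsymbol\Sigma\mathbf 1)$; $\mu_X$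 the a.s. limiting spectral distribution of $\mathbf X/\sqrt N$. QVE: for $z\in\mathbb H_-=\{\Im z<0\}$, $\mathbf g(z)$ is the unique solution in $(\mathbb H_+)^K$ of $\mathbf 1_K=z\mathbf g-\mathbf g\odot\boldsymbol\Gamma_K(\mathbf g-\mathbf 1_K)$, $\sum_k\rho_kg_k$ being the Stieltjes transform of $\mu_X$; $\mathbf g(1)$ is the value at $1$ of its continuous extension to $\mathbb H_-\cup\mathbb R$. $\succ$ is entrywise strict inequality. *)

From mathcomp Require Import all_boot all_order all_algebra.
From mathcomp Require Import reals.
From mathcomp.real_closed Require Export complex.
Import GRing.Theory Num.Theory.

Set Implicit Arguments.
Unset Strict Implicit.
Unset Printing Implicit Defensive.

Local Open Scope ring_scope.
Local Open Scope complex_scope.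

Section Defs.
Variable R : realType.
Variable K : nat.

Definition Dv (T : nmodType) (v : 'cV[T]_K) : 'M[T]_K := diag_mx v^T.

Definition hadamard (T : pzSemiRingType) (m n : nat) (A B : 'M[T]_(m, n)) :
  'M[T]_(m, n) := map2_mx *%R A B.

Definition sqrtv (rho : 'cV[R]_K) : 'cV[R]_K := map_mx Num.sqrt rho.

Definition OmegaK (rho : 'cV[R]_K) (S : 'M[R]_K) : 'M[R]_K :=
  Dv (sqrtv rho) *m S *m Dv (sqrtv rho).

Definition GammaK (rho : 'cV[R]_K) (S : 'M[R]_K) : 'M[R]_K := S *m Dv rho.

Definition toC (m n : nat) (A : 'M[R]_(m, n)) : 'M[R[i]]_(m, n) :=
  map_mx (fun x => x%:C) A.

Definition largest_eigenvalue (A : 'M[R]_K) (lambda : R) : Prop :=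
  eigenvalue A lambda /\ (forall mu, eigenvalue A mu -> mu <= lambda).

Definition QVE (rho : 'cV[R]_K) (S : 'M[R]_K) (z : R[i]) (g : 'cV[R[i]]_K) : Prop :=
  const_mx 1 = z *: g - hadamard g (toC (GammaK rho S) *m (g - const_mx 1)).

Definition in_Hminus (z : R[i]) : Prop := complex.Im z < 0.
Definition in_Hplus (z : R[i]) : Prop := 0 < complex.Im z.

(* w is the limit of g(z) as z -> z0 with z in H_- (i.e. the value at z0 of
   the continuous extension of g to H_- \cup R) *)
Definition lim_from_Hminus (g : R[i] -> 'cV[R[i]]_K) (z0 : R[i]) (w : 'cV[R[i]]_K)
  : Prop :=
  forall k : 'I_K, forall eps : R, 0 < eps -> exists delta : R, 0 < delta /\
    forall z, in_Hminus z -> `|z - z0| < delta%:C -> `|g z k 0 - w k 0| < eps%:C.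

End Defs.

(* Letting [z -> 1] in the QVE [g_k (z + (Gamma (1 - g))_k) = 1] gives the same identity
   at [g(1)], and the positive vector [Im g(z)] turns, through a Schur test, into the bound
   [t^T D_rho Gamma t <= sum_k rho_k |g_k(1)|^-2 t_k^2] for real [t].  The symmetry of
   [D_rho Gamma] then forces [Im g(1) = 0].  Writing [g(1) = 1 - u], testing the bound on
   the negative part of [u] gives [u >= 0], and [u_k = 0] for a single [k] would force
   [u = 0], hence [lambda_1(Omega) <= 1].  So [u > 0], and [(1 - u_k) (1 + (Gamma u)_k) = 1]
   is exactly [D_{g(1)} Omega v = v] for [v = D_{rho^{1/2}} u]; the left eigenvector
   equation follows from the symmetry of [Omega]. *)

From mathcomp Require Import all_boot all_order all_algebra.
From mathcomp Require Import reals.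
From mathcomp.real_closed Require Import complex.
From mathcomp Require Import ring lra.
Import Order.TTheory GRing.Theory Num.Theory Normc.

Set Implicit Arguments.
Unset Strict Implicit.
Unset Printing Implicit Defensive.

Local Open Scope ring_scope.
Local Open Scope complex_scope.

Notation cRe := complex.Re.
Notation cIm := complex.Im.

Section ComplexFacts.
Variable R : rcfType.
Implicit Types (a b : R[i]) (c : R).

Lemma normcE a : `|a| = (normc a)%:C.
Proof. by case: a. Qed.

Lemma normc_ge0 a : 0 <= normc a.
Proof. by case: a => x y; exact: sqrtr_ge0. Qed.

Lemma normc_gt0 a : a != 0 -> 0 < normc a.
Proof.
by move=> a0; rewrite lt_neqAle normc_ge0 andbT; apply: contra a0 => /eqP/esym/eq0_normc->.
Qed.

Lemma normcJ a : normc a^* = normc a.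
Proof. by case: a => x y /=; rewrite sqrrN. Qed.

Lemma sqr_normc a : normc a ^+ 2 = cRe a ^+ 2 + cIm a ^+ 2.
Proof. by case: a => x y /=; rewrite sqr_sqrtr // addr_ge0 ?sqr_ge0. Qed.

Lemma normc_Re a : `|cRe a| <= normc a.
Proof.
by case: a => x y /=; rewrite -sqrtr_sqr ler_sqrt ?addr_ge0 ?sqr_ge0 // lerDl sqr_ge0.
Qed.

Lemma mulcJ a : a * a^* = (normc a ^+ 2)%:C.
Proof. by rewrite sqr_normc; case: a => x y /=; congr (_ +i* _); ring. Qed.

Lemma Re_realM c a : cRe (c%:C * a) = c * cRe a.
Proof. by case: a => x y /=; ring. Qed.

Lemma Im_realM c a : cIm (c%:C * a) = c * cIm a.
Proof. by case: a => x y /=; ring. Qed.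

Lemma Re_mulNi a : cRe (a * - 'i) = cIm a.
Proof. by case: a => x y /=; ring. Qed.

(* From [a b = 1] one gets [|a|^2 b = conj a]. *)
Lemma mul_eq1_normc a b : a * b = 1 ->
  normc a ^+ 2 * cRe b = cRe a /\ normc a ^+ 2 * cIm b = - cIm a.
Proof.
move=> ab1; have e : (normc a ^+ 2)%:C * b = a^*.
  by rewrite -mulcJ mulrAC ab1 mul1r.
by rewrite -Re_realM -Im_realM e; case: (a).
Qed.

End ComplexFacts.

Section Cvg1.
Variable R : realType.
Implicit Types (a b c L : R[i]) (F G : R[i] -> R[i]).

Definition cvg1 F L := forall e : R, 0 < e -> exists2 d : R, 0 < d &
  forall z, in_Hminus z -> normc (z - 1) < d -> normc (F z - L) < e.

Lemma cvg1_cst c : cvg1 (fun=> c) c.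
Proof. by move=> e e_gt0; exists 1 => // z _ _; rewrite subrr normc0. Qed.

Lemma cvg1_id : cvg1 id 1.
Proof. by move=> e e_gt0; exists e. Qed.

Lemma cvg1D F G a b : cvg1 F a -> cvg1 G b -> cvg1 (fun z => F z + G z) (a + b).
Proof.
move=> Fa Gb e e_gt0; have e2_gt0 : 0 < e / 2 by rewrite divr_gt0.
have [d1 d1_gt0 Fd1] := Fa _ e2_gt0; have [d2 d2_gt0 Gd2] := Gb _ e2_gt0.
exists (Num.min d1 d2) => [|z Hz]; first by rewrite lt_min d1_gt0.
rewrite lt_min => /andP[z1 z2]; rewrite opprD addrACA.
have := le_normcD (F z - a) (G z - b); have := Fd1 z Hz z1; have := Gd2 z Hz z2; lra.
Qed.

Lemma cvg1N F a : cvg1 F a -> cvg1 (fun z => - F z) (- a).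
Proof.
move=> Fa e /Fa[d d_gt0 Fd]; exists d => // z Hz zd.
by rewrite -opprD normcN; apply: Fd.
Qed.

Lemma cvg1J F a : cvg1 F a -> cvg1 (fun z => (F z)^*) a^*.
Proof.
move=> Fa e /Fa[d d_gt0 Fd]; exists d => // z Hz zd.
by rewrite -rmorphB normcJ; apply: Fd.
Qed.

Lemma cvg1M F G a b : cvg1 F a -> cvg1 G b -> cvg1 (fun z => F z * G z) (a * b).
Proof.
move=> Fa Gb e e_gt0; set m := 1 + normc a + normc b.
have m_gt0 : 0 < m by have := normc_ge0 a; have := normc_ge0 b; rewrite /m; lra.
have em_gt0 : 0 < Num.min 1 (e / m) by rewrite lt_min ltr01 divr_gt0.
have [d1 d1_gt0 Fd1] := Fa _ em_gt0; have [d2 d2_gt0 Gd2] := Gb _ em_gt0.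
exists (Num.min d1 d2) => [|z Hz]; first by rewrite lt_min d1_gt0.
rewrite lt_min => /andP[/(Fd1 z Hz) + /(Gd2 z Hz)].
rewrite !lt_min => /andP[p1 pe] /andP[q1 qe].
have -> : F z * G z - a * b = (F z - a) * (G z - b) + (F z - a) * b + a * (G z - b).
  by ring.
apply: (le_lt_trans (le_normcD _ _)); rewrite !normcM.
apply: (le_lt_trans (lerD (le_normcD _ _) (lexx _))); rewrite !normcM.
have me : m * (e / m) = e by rewrite mulrC divfK ?gt_eqF.
move: p1 q1 pe qe me; rewrite /m.
have := normc_ge0 (F z - a); have := normc_ge0 (G z - b).
have := normc_ge0 a; have := normc_ge0 b.
set p := normc (F z - a); set q := normc (G z - b); set na := normc a; set nb := normc b.
set f := e / _ => *; nra.
Qed.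

Lemma cvg1_sum (I : Type) (s : seq I) (F : I -> R[i] -> R[i]) (a : I -> R[i]) :
  (forall i, cvg1 (F i) (a i)) ->
  cvg1 (fun z => \sum_(i <- s) F i z) (\sum_(i <- s) a i).
Proof.
move=> Fa; elim: s => [|i s IH].
  by move=> e e_gt0; exists 1 => // z _ _; rewrite !big_nil subrr normc0.
move=> e /(cvg1D (Fa i) IH)[d d_gt0 Fd]; exists d => // z Hz zd.
by rewrite !big_cons; apply: Fd.
Qed.

Lemma cvg1_near F L e : cvg1 F L -> 0 < e ->
  exists2 z, in_Hminus z & normc (F z - L) < e.
Proof.
move=> FL /FL[d d_gt0 Fd]; have d2_gt0 : 0 < d / 2 by rewrite divr_gt0.
exists (1 -i* (d / 2)); first by rewrite /in_Hminus /= oppr_lt0.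
apply: Fd; first by rewrite /in_Hminus /= oppr_lt0.
by rewrite /= subrr subr0 expr0n add0r sqrrN sqrtr_sqr gtr0_norm //; lra.
Qed.

Lemma cvg1_Re_ge F L (c : R) : cvg1 F L ->
  (forall z, in_Hminus z -> c <= cRe (F z)) -> c <= cRe L.
Proof.
move=> FL Fc; rewrite leNgt; apply/negP => Lc.
have Lc_gt0 : 0 < c - cRe L by rewrite subr_gt0.
have [z Hz] := cvg1_near FL Lc_gt0.
have := normc_Re (F z - L); rewrite raddfB /=.
have := Fc z Hz; have := ler_norm (cRe (F z) - cRe L); lra.
Qed.

Lemma cvg1_Im_ge F L (c : R) : cvg1 F L ->
  (forall z, in_Hminus z -> c <= cIm (F z)) -> c <= cIm L.
Proof.
move=> FL Fc; rewrite -Re_mulNi; apply: (cvg1_Re_ge (cvg1M FL (cvg1_cst _))).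
by move=> z Hz; rewrite Re_mulNi; apply: Fc.
Qed.

Lemma cvg1_eq F L c : cvg1 F L -> (forall z, in_Hminus z -> F z = c) -> L = c.
Proof.
move=> FL Fc; apply/eqP; rewrite -subr_eq0; apply/eqP/eq0_normc.
have := normc_ge0 (L - c); rewrite le_eqVlt => /predU1P[// | Lc_gt0].
have [z Hz] := cvg1_near FL Lc_gt0.
by rewrite Fc // -normcN opprB ltxx.
Qed.

End Cvg1.

Section Weights.
Variables (R : realFieldType) (K : nat) (rho : 'cV[R]_K) (S : 'M[R]_K).
Hypothesis rho_gt0 : forall k, 0 < rho k 0.
Hypothesis S_sym : forall k l, S k l = S l k.
Implicit Types (t u v x w y d : 'I_K -> R).

Definition Gam u k := \sum_l S k l * rho l 0 * u l.

Definition qform t := \sum_k rho k 0 * t k * Gam t k.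

Lemma sum_mulGamC u v :
  \sum_k rho k 0 * u k * Gam v k = \sum_k rho k 0 * v k * Gam u k.
Proof.
transitivity (\sum_k \sum_l rho k 0 * rho l 0 * S k l * u k * v l).
  by apply: eq_bigr => k _; rewrite mulr_sumr; apply: eq_bigr => l _; ring.
rewrite exchange_big /=; apply: eq_bigr => k _; rewrite mulr_sumr.
by apply: eq_bigr => l _; rewrite S_sym; ring.
Qed.

Lemma qformE t :
  qform t = \sum_k \sum_l rho k 0 * rho l 0 * S k l * (t k * t l).
Proof. by apply: eq_bigr => k _; rewrite mulr_sumr; apply: eq_bigr => l _; ring. Qed.

(* Schur test, via [2 t_k t_l <= t_k^2 y_l / y_k + t_l^2 y_k / y_l]. *)
Lemma qform_le_Schur t y d : (forall k, 0 < y k) -> (forall k l, 0 <= S k l) ->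
  (forall k, Gam y k <= d k * y k) ->
  qform t <= \sum_k rho k 0 * d k * t k ^+ 2.
Proof.
move=> y_gt0 S_ge0 Gy_le.
pose c k l := rho k 0 * rho l 0 * S k l * (t k ^+ 2 * y l / y k).
have c_sym : \sum_k \sum_l c l k = \sum_k \sum_l c k l.
  by rewrite exchange_big.
have amgm k l : rho k 0 * rho l 0 * S k l * (t k * t l) <= (c k l + c l k) / 2.
  rewrite /c -subr_ge0.
  have -> : (rho k 0 * rho l 0 * S k l * (t k ^+ 2 * y l / y k) +
             rho l 0 * rho k 0 * S l k * (t l ^+ 2 * y k / y l)) / 2
            - rho k 0 * rho l 0 * S k l * (t k * t l) =
          rho k 0 * rho l 0 * S k l * (y k * y l * (t k / y k - t l / y l) ^+ 2 / 2).
    by rewrite S_sym; field; rewrite !gt_eqF.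
  apply: mulr_ge0; first by rewrite !mulr_ge0 ?S_ge0 // ltW.
  by rewrite divr_ge0 // mulr_ge0 ?sqr_ge0 // mulr_ge0 // ltW.
rewrite qformE; apply: (le_trans (ler_sum _ (fun k _ => ler_sum _ (fun l _ => amgm k l)))).
have -> : \sum_k \sum_l (c k l + c l k) / 2 = \sum_k \sum_l c k l.
  transitivity ((\sum_k \sum_l c k l + \sum_k \sum_l c l k) / 2).
    rewrite -big_split mulr_suml; apply: eq_bigr => k _.
    by rewrite -big_split mulr_suml.
  by rewrite c_sym; field.
apply: ler_sum => k _; rewrite /c.
have -> : \sum_l rho k 0 * rho l 0 * S k l * (t k ^+ 2 * y l / y k) =
          rho k 0 * t k ^+ 2 / y k * Gam y k.
  by rewrite mulr_sumr; apply: eq_bigr => l _; field; rewrite gt_eqF.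
have -> : rho k 0 * d k * t k ^+ 2 = rho k 0 * t k ^+ 2 / y k * (d k * y k).
  by field; rewrite gt_eqF.
by rewrite ler_wpM2l // divr_ge0 ?(mulr_ge0 (ltW _) (sqr_ge0 _)) // ltW.
Qed.

(* The hypotheses are the real and imaginary parts of [|g|^2 h = conj g], i.e. of
   [g h = 1], for [g = x + i w] and [h = 1 + Gam (1 - x) - i Gam w]. *)
Lemma qve1_Im_eq0 x w :
  (forall k, 0 < x k ^+ 2 + w k ^+ 2) -> (forall k, 0 <= w k) ->
  (forall k, (x k ^+ 2 + w k ^+ 2) * (1 + Gam (fun l => 1 - x l) k) = x k) ->
  (forall k, (x k ^+ 2 + w k ^+ 2) * Gam w k = w k) ->
  forall k, w k = 0.
Proof.
move=> n_gt0 w_ge0 eRe eIm; set u := fun l => 1 - x l.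
pose T k := u k * Gam w k - w k * Gam u k.
have nT k : (x k ^+ 2 + w k ^+ 2) * T k = w k * (u k ^+ 2 + w k ^+ 2).
  have eu : (x k ^+ 2 + w k ^+ 2) * Gam u k = x k - (x k ^+ 2 + w k ^+ 2).
    by have := eRe k; rewrite -/u; lra.
  transitivity (u k * ((x k ^+ 2 + w k ^+ 2) * Gam w k) -
                w k * ((x k ^+ 2 + w k ^+ 2) * Gam u k)); first by rewrite /T; ring.
  by rewrite eIm eu /u; ring.
have rT_ge0 k : 0 <= rho k 0 * T k.
  rewrite pmulr_rge0 // -(pmulr_rge0 _ (n_gt0 k)) nT.
  by rewrite mulr_ge0 ?addr_ge0 ?sqr_ge0.
have sumT : \sum_k rho k 0 * T k = 0.
  under eq_bigr do rewrite mulrBr !mulrA.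
  by rewrite sumrB sum_mulGamC subrr.
move=> k; have := @psumr_eq0P _ _ _ _ (fun k _ => rT_ge0 k) sumT k isT.
move/eqP; rewrite mulf_eq0 gt_eqF //= => /eqP Tk.
have /eqP := nT k; rewrite Tk mulr0 eq_sym mulf_eq0 => /orP[/eqP // | ].
rewrite paddr_eq0 ?sqr_ge0 // !sqrf_eq0 => /andP[_ /eqP //].
Qed.

Lemma ler_Gam u v k : (forall k l, 0 <= S k l) -> (forall l, u l <= v l) ->
  Gam u k <= Gam v k.
Proof.
move=> S_ge0 uv; apply: ler_sum => l _.
by apply: ler_wpM2l; rewrite ?uv // mulr_ge0 ?S_ge0 // ltW.
Qed.

(* [qve1 u] says that [g = 1 - u] is a real solution of the QVE at [z = 1]. *)
Definition qve1 u := forall k, (1 - u k) * (1 + Gam u k) = 1.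

Lemma qve1_Gam u k : qve1 u -> Gam u k = u k * (1 + Gam u k).
Proof. by move/(_ k); lra. Qed.

Lemma qve1_lt0 u k : qve1 u -> u k < 0 ->
  0 < (1 + Gam u k) - (1 + Gam u k) ^+ 2.
Proof. by move/(_ k); set P := 1 + Gam u k => *; nra. Qed.

(* Test the quadratic bound against the negative part [t = min(u, 0)]. *)
Lemma qve1_ge0 u : (forall k l, 0 <= S k l) -> qve1 u ->
  (forall t, qform t <= \sum_k rho k 0 * (1 + Gam u k) ^+ 2 * t k ^+ 2) ->
  forall k, 0 <= u k.
Proof.
move=> S_ge0 hu hq; pose t k := Num.min (u k) 0.
have t_le0 k : t k <= 0 by rewrite ge_min lexx orbT.
have t_le_u k : t k <= u k by rewrite ge_min lexx.
have tt k : t k * t k = t k * u k.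
  by rewrite /t; case: leP => _; rewrite ?mul0r.
pose term k := rho k 0 * t k ^+ 2 * ((1 + Gam u k) - (1 + Gam u k) ^+ 2).
have term_ge0 k : 0 <= term k.
  have [u_ge0|u_lt0] := leP 0 (u k).
    by rewrite /term /t (min_idPr u_ge0) expr0n mulr0 mul0r.
  by apply: mulr_ge0; [exact: mulr_ge0 (ltW _) (sqr_ge0 _) | exact/ltW/qve1_lt0].
have sum_term : \sum_k term k = 0.
  apply/eqP; rewrite eq_le sumr_ge0 ?andbT //.
  under eq_bigr do rewrite /term mulrBr.
  rewrite sumrB subr_le0; apply: le_trans (le_trans _ (hq t)) _.
  - apply: ler_sum => k _; rewrite -!mulrA; apply: ler_wpM2l; first exact: ltW.
    rewrite mulrA tt -mulrA -(qve1_Gam _ hu).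
    by apply: ler_wnM2l => //; apply: ler_Gam.
  - by rewrite le_eqVlt; apply/orP; left; apply/eqP; apply: eq_bigr => k _; ring.
move=> k; rewrite leNgt; apply/negP => u_lt0.
have := @psumr_eq0P _ _ _ _ (fun k _ => term_ge0 k) sum_term k isT.
rewrite /term /t (min_idPl (ltW u_lt0)); apply/eqP.
by rewrite !mulf_neq0 ?(gt_eqF (rho_gt0 k)) ?(gt_eqF (qve1_lt0 hu u_lt0)) ?(lt_eqF u_lt0).
Qed.

Lemma qve1_gt0 u : (forall k l, 0 < S k l) -> qve1 u ->
  (forall t, qform t <= \sum_k rho k 0 * (1 + Gam u k) ^+ 2 * t k ^+ 2) ->
  (exists t, \sum_k rho k 0 * t k ^+ 2 < qform t) ->
  forall k, 0 < u k.
Proof.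
move=> S_gt0 hu hq [t0 qt0] k.
have u_ge0 := qve1_ge0 (fun k l => ltW (S_gt0 k l)) hu hq.
rewrite lt_neqAle u_ge0 andbT; apply/eqP => u0.
have Gu0 : \sum_l S k l * rho l 0 * u l = 0.
  by rewrite -/(Gam u k) qve1_Gam // -u0 mul0r.
have u_eq0 l : u l = 0.
  have Su_ge0 l' : 0 <= S k l' * rho l' 0 * u l'.
    by rewrite !mulr_ge0 ?u_ge0 ?ltW.
  have := @psumr_eq0P _ _ _ _ (fun l' _ => Su_ge0 l') Gu0 l isT.
  by move/eqP; rewrite !mulf_eq0 (gt_eqF (S_gt0 k l)) (gt_eqF (rho_gt0 l)) => /eqP.
suff : qform t0 <= \sum_k rho k 0 * t0 k ^+ 2 by rewrite leNgt qt0.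
apply: le_trans (hq t0) _; rewrite le_eqVlt; apply/orP; left; apply/eqP.
apply: eq_bigr => j _; rewrite /Gam big1 ?addr0 ?expr1n ?mulr1 // => l _.
by rewrite u_eq0 mulr0.
Qed.

End Weights.

Section QVE_at_1.
Variables (R : realType) (K : nat) (rho : 'cV[R]_K) (S : 'M[R]_K).
Local Notation Gam := (Gam rho S).
Local Notation qform := (qform rho S).
Local Notation qve1 := (qve1 rho S).

Definition qden (z : R[i]) (gv : 'cV[R[i]]_K) k :=
  z + \sum_l (S k l * rho l 0)%:C * (1 - gv l 0).

Lemma QVE_mul_qden z gv : QVE rho S z gv -> forall k, gv k 0 * qden z gv k = 1.
Proof.
move=> /matrixP qve k; move: (qve k 0); rewrite /hadamard !mxE => ->.
rewrite /qden mulrDr; congr (_ + _); first exact: mulrC.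
rewrite -mulrN -sumrN; congr (_ * _).
apply: eq_bigr => l _; rewrite /GammaK /Dv mul_mx_diag !mxE rmorphM.
by rewrite -mulrN opprB.
Qed.

Lemma Re_qden z gv k :
  cRe (qden z gv k) = cRe z + Gam (fun l => 1 - cRe (gv l 0)) k.
Proof.
rewrite raddfD raddf_sum /=; congr (_ + _); apply: eq_bigr => l _.
by rewrite Re_realM raddfB.
Qed.

Lemma Im_qden z gv k : cIm (qden z gv k) = cIm z - Gam (fun l => cIm (gv l 0)) k.
Proof.
rewrite raddfD raddf_sum /= -sumrN; congr (_ + _); apply: eq_bigr => l _.
by rewrite Im_realM raddfB /= sub0r mulrN.
Qed.

Variables (g : R[i] -> 'cV[R[i]]_K) (g1 : 'cV[R[i]]_K).
Hypothesis rho_gt0 : forall k, 0 < rho k 0.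
Hypothesis S_sym : forall k l, S k l = S l k.
Hypothesis S_gt0 : forall k l, 0 < S k l.
Hypothesis g_Hplus : forall z, in_Hminus z -> forall k, 0 < cIm (g z k 0).
Hypothesis g_QVE : forall z, in_Hminus z -> QVE rho S z (g z).
Hypothesis g_cvg : forall k, cvg1 (fun z => g z k 0) (g1 k 0).

Lemma cvg1_qden k : cvg1 (fun z => qden z (g z) k) (qden 1 g1 k).
Proof.
rewrite /qden; apply: cvg1D; first exact: cvg1_id.
apply: cvg1_sum => l.
exact: cvg1M (cvg1_cst _) (cvg1D (cvg1_cst 1) (cvg1N (g_cvg l))).
Qed.

Lemma Im_g1_ge0 k : 0 <= cIm (g1 k 0).
Proof. by apply: cvg1_Im_ge (g_cvg k) _ => z Hz; apply/ltW/g_Hplus. Qed.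

Lemma g1_mul_qden k : g1 k 0 * qden 1 g1 k = 1.
Proof.
apply: cvg1_eq (cvg1M (g_cvg k) (cvg1_qden k)) _ => z Hz.
exact: QVE_mul_qden (g_QVE Hz) k.
Qed.

(* [y = Im g(z)] is a positive test vector for the Schur test: the imaginary part of
   [|qden|^2 g = conj qden] reads [Gam y = |qden|^2 y + Im z]. *)
Lemma qform_le_qden z t : in_Hminus z ->
  qform t <= \sum_k rho k 0 * normc (qden z (g z) k) ^+ 2 * t k ^+ 2.
Proof.
move=> Hz; apply: qform_le_Schur (fun k => g_Hplus Hz k) _ _ => // [k l|k].
  exact: ltW.
have [_] := mul_eq1_normc (etrans (mulrC _ _) (QVE_mul_qden (g_QVE Hz) k)).
by rewrite Im_qden; move: Hz; rewrite /in_Hminus; lra.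
Qed.

Lemma qform_le_qden1 t :
  qform t <= \sum_k rho k 0 * normc (qden 1 g1 k) ^+ 2 * t k ^+ 2.
Proof.
have ReE (h : 'I_K -> R[i]) :
    cRe (\sum_k (rho k 0 * t k ^+ 2)%:C * (h k * (h k)^*)) =
    \sum_k rho k 0 * normc (h k) ^+ 2 * t k ^+ 2.
  by rewrite raddf_sum; apply: eq_bigr => k _; rewrite mulcJ -rmorphM /=; ring.
rewrite -ReE; apply: cvg1_Re_ge (cvg1_sum _ (fun k => cvg1M (cvg1_cst _)
  (cvg1M (cvg1_qden k) (cvg1J (cvg1_qden k))))) _ => z Hz.
by rewrite ReE; apply: qform_le_qden.
Qed.

Lemma Im_g1_eq0 k : cIm (g1 k 0) = 0.
Proof.
have n_gt0 l : 0 < cRe (g1 l 0) ^+ 2 + cIm (g1 l 0) ^+ 2.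
  rewrite -sqr_normc exprn_gt0 // normc_gt0 //; apply: contra_eq_neq (g1_mul_qden l).
  by move=> ->; rewrite mul0r eq_sym oner_eq0.
apply: (qve1_Im_eq0 rho_gt0 S_sym n_gt0 Im_g1_ge0) => l;
  have [eRe eIm] := mul_eq1_normc (g1_mul_qden l); rewrite -sqr_normc.
- by rewrite -eRe Re_qden.
- by apply: oppr_inj; rewrite -eIm Im_qden /= sub0r mulrN.
Qed.

Lemma g1_real_qve1 : (exists t, \sum_k rho k 0 * t k ^+ 2 < qform t) ->
  exists u, [/\ forall k, g1 k 0 = (1 - u k)%:C, forall k, 0 < u k &
                qve1 u].
Proof.
move=> qform_gt; set u := fun k => 1 - cRe (g1 k 0).
have g1E k : g1 k 0 = (1 - u k)%:C.
  by rewrite /u opprB addrC subrK; move: (Im_g1_eq0 k); case: (g1 k 0) => x y /= ->.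
have qdenE k : qden 1 g1 k = (1 + Gam u k)%:C.
  apply/eqP; rewrite eq_complex Re_qden Im_qden /= -/u eqxx /=.
  by rewrite /Gam big1 ?subr0 // => l _; rewrite Im_g1_eq0 mulr0.
have u_sol : qve1 u.
  move=> k; have := congr1 (@complex.Re R) (g1_mul_qden k).
  by rewrite g1E qdenE /= mul0r subr0.
exists u; split=> //; apply: qve1_gt0 => // t.
apply: le_trans (qform_le_qden1 t) _; rewrite le_eqVlt; apply/orP; left; apply/eqP.
by apply: eq_bigr => k _; rewrite qdenE sqr_normc /= expr0n /= addr0.
Qed.

End QVE_at_1.

Lemma trmx_mul_fix (T : comPzRingType) (n : nat) (D A : 'M[T]_n) (v : 'cV[T]_n) :
  D^T = D -> A^T = A -> D *m A *m v = v -> (D *m A)^T *m (A *m v) = A *m v.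
Proof. by move=> DT AT DAv; rewrite trmx_mul DT AT -mulmxA (mulmxA D) DAv. Qed.

Section OmegaK.
Variables (R : realType) (K : nat) (rho : 'cV[R]_K) (S : 'M[R]_K).
Hypothesis rho_gt0 : forall k, 0 < rho k 0.

Lemma OmegaKE k l :
  OmegaK rho S k l = Num.sqrt (rho k 0) * S k l * Num.sqrt (rho l 0).
Proof. by rewrite /OmegaK /Dv mul_mx_diag mxE mul_diag_mx !mxE. Qed.

Lemma trmx_OmegaK : S^T = S -> (OmegaK rho S)^T = OmegaK rho S.
Proof. by move=> ST; rewrite /OmegaK /Dv !trmx_mul !tr_diag_mx ST mulmxA. Qed.

(* The witness is [t = D_rho^{-1/2} e] for an eigenvector [e], so [qform t = l1 |e|^2]. *)
Lemma qform_gt_of_eigenvalue l1 : (forall k l, S k l = S l k) ->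
  eigenvalue (OmegaK rho S) l1 -> 1 < l1 ->
  exists t, \sum_k rho k 0 * t k ^+ 2 < qform rho S t.
Proof.
move=> S_sym /eigenvalueP[e eE e_neq0] l1_gt1.
have sqrt_gt0 k : 0 < Num.sqrt (rho k 0) by rewrite sqrtr_gt0.
have sqr_sqrt k : Num.sqrt (rho k 0) ^+ 2 = rho k 0 by rewrite sqr_sqrtr ?ltW.
exists (fun k => e 0 k / Num.sqrt (rho k 0)).
have -> : \sum_k rho k 0 * (e 0 k / Num.sqrt (rho k 0)) ^+ 2 = \sum_k e 0 k ^+ 2.
  apply: eq_bigr => k _; move: (sqr_sqrt k) (sqrt_gt0 k).
  by set a := Num.sqrt (rho k 0) => <- a_gt0; field; rewrite gt_eqF.
have -> : qform rho S (fun k => e 0 k / Num.sqrt (rho k 0)) = l1 * \sum_k e 0 k ^+ 2.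
  rewrite mulr_sumr; apply: eq_bigr => k _.
  have := congr1 (fun m : 'rV_K => m 0 k) eE; rewrite !mxE => eEk.
  rewrite expr2 mulrA -eEk /Gam mulr_sumr mulr_suml; apply: eq_bigr => l _.
  rewrite OmegaKE S_sym; move: (sqr_sqrt k) (sqr_sqrt l) (sqrt_gt0 k) (sqrt_gt0 l).
  set a := Num.sqrt (rho k 0); set b := Num.sqrt (rho l 0) => <- <- a_gt0 b_gt0.
  by field; rewrite !gt_eqF.
rewrite ltr_pMl // lt_neqAle sumr_ge0 ?andbT => [|k _]; last exact: sqr_ge0.
apply: contra e_neq0 => /eqP/esym sum0; apply/eqP/matrixP => i k.
rewrite (ord1 i) mxE; apply/eqP; rewrite -sqrf_eq0; apply/eqP.
exact: @psumr_eq0P _ _ _ (fun k => e 0 k ^+ 2) (fun k _ => sqr_ge0 _) sum0 k isT.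
Qed.

Variables (u : 'I_K -> R) (g1 : 'cV[R[i]]_K).
Hypothesis g1E : forall k, g1 k 0 = (1 - u k)%:C.
Hypothesis u_sol : qve1 rho S u.

Lemma Dv_sqrt_mulE k :
  (Dv (toC (sqrtv rho)) *m (const_mx 1 - g1)) k 0 = (Num.sqrt (rho k 0) * u k)%:C.
Proof. by rewrite /Dv mul_diag_mx !mxE g1E rmorphB rmorph1 opprB addrC subrK rmorphM. Qed.

Lemma Dv_OmegaK_fix :
  Dv g1 *m toC (OmegaK rho S) *m (Dv (toC (sqrtv rho)) *m (const_mx 1 - g1)) =
  Dv (toC (sqrtv rho)) *m (const_mx 1 - g1).
Proof.
apply/matrixP => k j; rewrite (ord1 j) Dv_sqrt_mulE mxE.
under eq_bigr => l _ do rewrite Dv_sqrt_mulE /Dv mul_diag_mx 3!mxE OmegaKE g1E -!rmorphM.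
rewrite -rmorph_sum; congr (_%:C).
transitivity (Num.sqrt (rho k 0) * ((1 - u k) * Gam rho S u k)).
  rewrite /Gam !mulr_sumr; apply: eq_bigr => l _.
  move: (sqr_sqrtr (ltW (rho_gt0 l))); set b := Num.sqrt (rho l 0) => <-; ring.
by congr (_ * _); have := u_sol k; lra.
Qed.

End OmegaK.

Lemma lim_from_Hminus_cvg1 (R : realType) (K : nat) (g : R[i] -> 'cV[R[i]]_K) g1 :
  lim_from_Hminus g 1 g1 -> forall k, cvg1 (fun z => g z k 0) (g1 k 0).
Proof.
move=> lim k e /(lim k)[d [d_gt0 gd]]; exists d => // z Hz.
by rewrite -ltcR -normcE => /(gd z Hz); rewrite normcE ltcR.
Qed.

Theorem mainTheorem11 (R : realType) (K : nat) (rho : 'cV[R]_K) (S : 'M[R]_K)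
    (g : R[i] -> 'cV[R[i]]_K) (g1 : 'cV[R[i]]_K) :
  (0 < K)%N ->
  (forall k, 0 < rho k 0 < 1) ->
  \sum_k rho k 0 = 1 ->
  S^T = S ->
  (forall k l, 0 < S k l) ->
  (* g is the solution of the QVE in (H_+)^K for z in H_- *)
  (forall z, in_Hminus z -> (forall k, in_Hplus (g z k 0)) /\ QVE rho S z (g z)) ->
  (* g1 = g(1), the value at 1 of the continuous extension of g *)
  lim_from_Hminus g 1 g1 ->
  (* lambda_1(Omega_K) > 1 *)
  (exists lambda1, largest_eigenvalue (OmegaK rho S) lambda1 /\ 1 < lambda1) ->
  let vr := Dv (toC (sqrtv rho)) *m (const_mx 1 - g1) in
  let vl := toC (OmegaK rho S) *m vr in
  let M := Dv g1 *m toC (OmegaK rho S) in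
  (forall k, 0 < vr k 0) /\ M *m vr = vr /\ M^T *m vl = vl.
Proof.
move=> _ rho_bd _ ST S_gt0 g_sol g_lim [l1 [[l1_eig _] l1_gt1]] vr vl M.
have rho_gt0 k : 0 < rho k 0 by case/andP: (rho_bd k).
have S_sym k l : S k l = S l k by rewrite -[in LHS]ST mxE.
have [u [g1E u_gt0 u_sol]] := g1_real_qve1 rho_gt0 S_sym S_gt0
  (fun z Hz => (g_sol z Hz).1) (fun z Hz => (g_sol z Hz).2)
  (lim_from_Hminus_cvg1 g_lim) (qform_gt_of_eigenvalue rho_gt0 S_sym l1_eig l1_gt1).
have Mvr : M *m vr = vr by apply: Dv_OmegaK_fix.
split; [|split=> //].
  by move=> k; rewrite (Dv_sqrt_mulE _ g1E) ltcR mulr_gt0 ?sqrtr_gt0.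
apply: trmx_mul_fix Mvr; first by rewrite /Dv tr_diag_mx.
by rewrite /toC map_trmx trmx_OmegaK.
Qed.
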